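(* Let $n$ and $d$ be positive integers. Suppose there is a prime $q$ with $n/(d+1)<q<n/d$ and a prime power $p^a$ ($p$ prime, $a\ge1$) dividing $n$ such that $n-dq<p^a$. Then $n$ satisfies the $N$-variation of Condition 1 with $N=2+\lfloor d/2\rfloor$.
   Context: A positive integer $n$ satisfies the $N$-variation of Condition 1 if there exist $N$ different primes $p_1,\dots,p_N$ such that for every $1\le k\le n-1$, $\binom{n}{k}$ is divisible by at least one of $p_1,\dots,p_N$. *)

From mathcomp Require Import all_boot.
Set Implicit Arguments. Unset Strict Implicit. Unset Printing Implicit Defensive.

Definition condition1_var (N n : nat) : Prop :=
  exists ps : seq nat,
    [/\ size ps = N, uniq ps, all prime ps &
        forall k, 1 <= k <= n.-1 -> has (fun p => p %| 'C(n, k)) ps].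

From mathcomp Require Import all_boot zify.

(* Write n = d q + r with r < q, and P = p ^ a.  For 0 < k < n, q divides
   'C(n, k) when k mod q > r (adding k and n - k in base q carries in the last
   digit), and p divides it when P does not divide k.  The remaining
   exceptional k are multiples of P with k = i q + j, j <= r; as r < P, k is
   then the only multiple of P in [i q, i q + r], so it is determined by i.
   Now n - k is exceptional too and the two quotients by q add up to d, so one
   of k, n - k has quotient i with 1 <= i <= d/2.  Choosing one prime factor of
   'C(n, k) = 'C(n, n - k) for each such i, plus p and q, gives 2 + d/2 primes. *)

Lemma logn_fact_trunc q x N : prime q -> x <= N ->
  logn q x`! = \sum_(1 <= t < N.+1) x %/ q ^ t.
Proof.
move=> q_pr le_xN; rewrite logn_fact // [RHS](@big_cat_nat _ _ _ x.+1) //=.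
rewrite -[LHS]addn0; congr (_ + _); symmetry.
rewrite big_nat_cond big1 // => t /andP[/andP[lt_xt _] _].
by rewrite divn_small // (leq_trans lt_xt) // ltnW // ltn_expl ?prime_gt1.
Qed.

(* Legendre's formula makes [logn q 'C(m + k, k)] the number of carries when
   adding [m] and [k] in base [q]; a carry in the last digit suffices. *)
Lemma prime_dvd_bin_carry q m k : prime q -> q <= m %% q + k %% q ->
  q %| 'C(m + k, k).
Proof.
move=> q_pr carry; have q_gt0 := prime_gt0 q_pr.
have mk_gt0 : 0 < m + k.
  by case: m k carry => [|m] [|k] //; rewrite !mod0n leqn0 gtn_eqF.
have sumD : \sum_(1 <= t < (m + k).+1) (m + k) %/ q ^ t =
    \sum_(1 <= t < (m + k).+1) m %/ q ^ t + \sum_(1 <= t < (m + k).+1) k %/ q ^ t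
    + \sum_(1 <= t < (m + k).+1) (q ^ t <= m %% q ^ t + k %% q ^ t).
  by rewrite -!big_split; apply: eq_bigr => t _; rewrite divnD ?expn_gt0 ?q_gt0.
have carry_gt0 : 0 < \sum_(1 <= t < (m + k).+1) (q ^ t <= m %% q ^ t + k %% q ^ t).
  by rewrite big_ltn //= expn1 carry.
have := congr1 (logn q) (bin_fact (leq_addl m k)).
rewrite addnK !lognM ?muln_gt0 ?fact_gt0 ?bin_gt0 ?leq_addl //.
rewrite !(@logn_fact_trunc q _ (m + k)) ?leq_addl ?leq_addr // sumD => logC.
have : 0 < logn q 'C(m + k, k) by lia.
by rewrite logn_gt0 mem_primes => /and3P[].
Qed.

Lemma prime_dvd_bin_modn q n k : prime q -> k <= n -> n %% q < k %% q ->
  q %| 'C(n, k).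
Proof.
move=> q_pr le_kn lt_mod; rewrite -(subnK le_kn); apply: prime_dvd_bin_carry => //.
rewrite leqNgt; apply: contraL lt_mod => no_carry.
by rewrite -(subnK le_kn) -modnDm modn_small // -leqNgt leq_addl.
Qed.

Lemma dvdn_bin_coprime m n k : m %| n -> coprime m 'C(n, k) -> m %| k.
Proof.
case: k => [|k] m_n coC; first exact: dvdn0.
by rewrite -(Gauss_dvdr _ coC) mulnC -mul_bin_diag dvdn_mulr.
Qed.

Lemma prime_dvd_bin_pfactor p a n k : prime p -> p ^ a %| n -> ~~ (p ^ a %| k) ->
  p %| 'C(n, k).
Proof.
move=> p_pr pa_n; apply: contraR => p_ndvd.
by apply: dvdn_bin_coprime pa_n _; rewrite coprimeXl // prime_coprime.
Qed.

Lemma bin_gt1 n k : 0 < k < n -> 1 < 'C(n, k).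
Proof.
case: k => [|k] //=; case: n => [|n] // lt_kn.
by rewrite binS -addn1 leq_add // bin_gt0 // ltnW.
Qed.

Lemma prime_notin (s : seq nat) : exists2 x, prime x & x \notin s.
Proof.
have [x lt_max x_pr] := prime_above (\max_(y <- s) y).
exists x => //; apply: contraL lt_max => x_s.
by rewrite -leqNgt (leq_bigmax_seq x x_s).
Qed.

Lemma extend_uniq_primes m (s : seq nat) : uniq s -> all prime s ->
  exists t : seq nat,
    [/\ size t = size s + m, uniq t, all prime t & {subset s <= t}].
Proof.
elim: m s => [|m IHm] s s_uniq s_pr; first by exists s; rewrite addn0; split.
have [x x_pr x_s] := prime_notin s.
have xs_uniq : uniq (x :: s) by rewrite /= x_s.
have xs_pr : all prime (x :: s) by rewrite /= x_pr.
have [t [size_t t_uniq t_pr sub_t]] := IHm _ xs_uniq xs_pr.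
exists t; split => //; first by rewrite size_t addSnnS.
by move=> y y_s; apply: sub_t; rewrite in_cons y_s orbT.
Qed.

Lemma condition1_var_of_cover N n (s : seq nat) : size s <= N ->
  (forall k, 0 < k < n -> has (fun x => prime x && (x %| 'C(n, k))) s) ->
  condition1_var N n.
Proof.
move=> size_s cover; set s' := undup (filter prime s).
have size_s' : size s' <= N.
  by rewrite (leq_trans (size_undup _)) // size_filter (leq_trans (count_size _ _)).
have s'_pr : all prime s'.
  by apply/allP => x; rewrite mem_undup mem_filter => /andP[].
have [t [size_t t_uniq t_pr sub_t]] :=
  @extend_uniq_primes (N - size s') s' (undup_uniq _) s'_pr.
exists t; split => //; first by rewrite size_t subnKC.
move=> k /andP[k_gt0 le_kn]; have k_range : 0 < k < n by lia.
have /hasP[x x_s /andP[x_pr x_dvd]] := cover k k_range.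
by apply/hasP; exists x => //; apply: sub_t; rewrite mem_undup mem_filter x_pr.
Qed.

Lemma dvdn_eq_trunc m k x : m %| k -> k <= x < k + m -> k = x %/ m * m.
Proof.
move=> /dvdnP[c ->] /andP[le_kx lt_x]; have m_gt0 : 0 < m by lia.
by rewrite -(subnKC le_kx) divnMDl // divn_small ?addn0 //; lia.
Qed.

Lemma subn_half_leq d i : d./2 < i -> d - i <= d./2.
Proof. by have := odd_double_half d; case: (odd d) => /=; lia. Qed.

Lemma subn_divn_modn q d r i j : j <= r -> r < q -> i <= d ->
  (d * q + r - (i * q + j)) %/ q = d - i /\ (d * q + r - (i * q + j)) %% q = r - j.
Proof.
move=> le_jr lt_rq le_id.
have -> : d * q + r - (i * q + j) = (d - i) * q + (r - j).
  by rewrite mulnBl; have := leq_mul le_id (leqnn q); lia.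
by rewrite divnMDl ?modnMDl ?divn_small ?modn_small //; lia.
Qed.

Section BinomialCover.

Variables n d q p a : nat.
Hypotheses (q_pr : prime q) (p_pr : prime p).
Hypotheses (n_lt : n < d.+1 * q) (le_dq : d * q <= n).
Hypotheses (pa_n : p ^ a %| n) (r_lt : n - d * q < p ^ a).

Local Notation r := (n - d * q).
Local Notation P := (p ^ a).

Let q_gt0 : 0 < q := prime_gt0 q_pr.

Let r_lt_q : r < q.
Proof. by move: n_lt; rewrite mulSn; lia. Qed.

Let n_mod_q : n %% q = r.
Proof. by rewrite -{1}(subnKC le_dq) modnMDl modn_small. Qed.

Definition window_multiple i := (i * q + r) %/ P * P.

Definition exceptional k := [&& 0 < k < n, P %| k & k %% q <= r].

(* Entries equal to [pdiv 1 = 1] (no multiple of P in the window of i) are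
   harmless: condition1_var_of_cover only uses the primes of the list. *)
Definition cover_primes :=
  q :: p :: [seq pdiv 'C(n, window_multiple i) | i <- iota 1 d./2].

Lemma not_exceptional_dvd k : 0 < k < n -> ~~ exceptional k ->
  (q %| 'C(n, k)) || (p %| 'C(n, k)).
Proof.
move=> k_range; rewrite /exceptional k_range /= negb_and -ltnNge => /orP[P_k | lt_r].
  by apply/orP; right; exact: prime_dvd_bin_pfactor P_k.
by rewrite prime_dvd_bin_modn ?n_mod_q //; lia.
Qed.

Lemma exceptional_divq_gt0 k : exceptional k -> 0 < k %/ q.
Proof.
case/and3P => /andP[k_gt0 _] P_k le_r; rewrite divn_gt0 // leqNgt.
apply: contraL le_r => lt_kq; have := dvdn_leq k_gt0 P_k.
by rewrite modn_small //; lia.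
Qed.

Lemma exceptional_compl k : exceptional k ->
  (n - k) %/ q = d - k %/ q /\ exceptional (n - k).
Proof.
case/and3P => /andP[k_gt0 lt_kn] P_k le_r.
have le_kd : k %/ q <= d.
  rewrite -ltnS -(ltn_pmul2r q_gt0) (leq_ltn_trans (leq_trunc_div k q)) //.
  exact: ltn_trans lt_kn n_lt.
have nk_eq : n - k = d * q + r - (k %/ q * q + k %% q).
  by rewrite -divn_eq subnKC.
have [div_nk mod_nk] := @subn_divn_modn q d r _ _ le_r r_lt_q le_kd.
rewrite nk_eq div_nk; split => //; apply/and3P; split.
- by rewrite -nk_eq subn_gt0 lt_kn ltn_subrL k_gt0 (ltn_trans k_gt0 lt_kn).
- by rewrite -nk_eq dvdn_sub.
- by rewrite mod_nk leq_subr.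
Qed.

Lemma exceptional_window k : exceptional k -> k = window_multiple (k %/ q).
Proof.
case/and3P => _ P_k le_r; apply: dvdn_eq_trunc P_k _.
by move: (divn_eq k q) le_r; move: (k %/ q) (k %% q) => i j; lia.
Qed.

Lemma exceptional_window_mem k : exceptional k ->
  exists2 i, i \in iota 1 d./2 & window_multiple i \in [:: k; n - k].
Proof.
move=> exc_k; have [div_nk exc_nk] := exceptional_compl _ exc_k.
have := exceptional_divq_gt0 _ exc_nk; have := exceptional_window _ exc_nk.
have := exceptional_divq_gt0 _ exc_k; have := exceptional_window _ exc_k.
rewrite div_nk; move: (k %/ q) => i k_win i_gt0 nk_win i'_gt0.
case: (leqP i d./2) => [le_half | gt_half].
  exists i; first by rewrite mem_iota i_gt0 add1n ltnS.
  by rewrite -k_win mem_head.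
exists (d - i); first by rewrite mem_iota i'_gt0 add1n ltnS subn_half_leq.
by rewrite -nk_win !in_cons eqxx orbT.
Qed.

Lemma cover_primesP k : 0 < k < n ->
  has (fun x => prime x && (x %| 'C(n, k))) cover_primes.
Proof.
move=> k_range; case: (boolP (exceptional k)) => [exc_k | ].
  have [i i_mem win] := exceptional_window_mem _ exc_k.
  have C_eq : 'C(n, window_multiple i) = 'C(n, k).
    by move: win; rewrite !in_cons orbF => /orP[]/eqP->; rewrite ?bin_sub //; lia.
  apply/hasP; exists (pdiv 'C(n, k)); last by rewrite pdiv_prime ?pdiv_dvd ?bin_gt1.
  have := map_f (fun j => pdiv 'C(n, window_multiple j)) i_mem.
  by rewrite C_eq !in_cons => ->; rewrite !orbT.
move=> /(not_exceptional_dvd _ k_range)/orP[q_dvd | p_dvd]; apply/hasP.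
  by exists q; rewrite ?mem_head ?q_pr.
by exists p; rewrite ?in_cons ?eqxx ?orbT ?p_pr.
Qed.

End BinomialCover.

(* n/(d+1) < q < n/d is written over nat as n < (d+1)*q and d*q < n. *)
Theorem mainTheorem14 (n d q p a : nat) :
  0 < n -> 0 < d ->
  prime q -> n < d.+1 * q -> d * q < n ->
  prime p -> 0 < a -> p ^ a %| n -> n - d * q < p ^ a ->
  condition1_var (2 + d./2) n.
Proof.
move=> _ _ q_pr n_lt lt_dq p_pr _ pa_n r_lt.
apply: (@condition1_var_of_cover _ _ (cover_primes n d q p a)).
  by rewrite /= size_map size_iota.
by apply: cover_primesP => //; exact: ltnW.
Qed.
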